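(* Let $N \ge 1$ and let $W_N$ be the set of binary words of length $N$. Define $\varphi_4 : W_N \to W_N$ by $\varphi_4(u) = v\, 01100\, v'$ if $u = v\, 01010\, v'$ where $v, v'$ are (possibly empty) words such that the word $v010$ does not contain $01010$ as a contiguous subword; and $\varphi_4(u) = u$ otherwise. Then $|P(\varphi_4(u))| \leq |P(u)|$ for every $u \in W_N$.
   Context: Juxtaposition denotes concatenation. For a binary word $w = w_1 \cdots w_\ell$ of length $\ell$, $P(w)$ is the set of indices $i \geq 2$ such that at least one of the following holds: (i) $\ell \geq i$ and $w_{i-1} w_i = 00$; (ii) $\ell \geq i+2$ and $w_{i-1} w_i w_{i+1} w_{i+2} = 0100$; (iii) $\ell \geq i+3$ and $w_{i-1} \cdots w_{i+3} = 01010$. *)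

From mathcomp Require Import all_boot.
Set Implicit Arguments. Unset Strict Implicit. Unset Printing Implicit Defensive.

(* Binary words: seq bool, with false = 0 and true = 1. *)
Definition word := seq bool.

(* 1-indexed letter w_j of w (j >= 1). *)
Definition letter (w : word) (j : nat) : bool := nth false w j.-1.

Definition inP (w : word) (i : nat) : bool :=
  let l := size w in
  (2 <= i) &&
  [|| (i <= l) && (letter w i.-1 == false) && (letter w i == false),
      (i + 2 <= l) && (letter w i.-1 == false) && (letter w i == true)
        && (letter w i.+1 == false) && (letter w i.+2 == false)
    | (i + 3 <= l) && (letter w i.-1 == false) && (letter w i == true)
        && (letter w i.+1 == false) && (letter w i.+2 == true)
        && (letter w i.+3 == false)].

(* P(w) as a finite list of indices: every index in P(w) lies in [2, size w]. *)
Definition Pset (w : word) : seq nat := [seq i <- iota 0 (size w).+1 | inP w i].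

Definition cardP (w : word) : nat := size (Pset w).

Definition w01010 : word := [:: false; true; false; true; false].
Definition w01100 : word := [:: false; true; true; false; false].
Definition w010 : word := [:: false; true; false].

Definition phi4 (u : word) : word :=
  if [exists k : 'I_(size u).+1,
        (u == take k u ++ w01010 ++ drop (k + 5) u)
        && ~~ infix w01010 (take k u ++ w010)]
  then
    let k := [arg min_(k < ord0 | (u == take k u ++ w01010 ++ drop (k + 5) u)
                                 && ~~ infix w01010 (take k u ++ w010)) (k : nat)]
               : 'I_(size u).+1 in
    take k u ++ w01100 ++ drop (k + 5) u
  else u.

(** Replacing the block 01010 by 01100 changes only the letters at the
    3rd and 4th positions of the block, and membership of an index [i] in
    [P] only depends on the letters [w_(i-1) .. w_(i+3)].  Hence [P] can only
    change at the six indices around the block, and there the claim is a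
    finite check on the two letters preceding and the four letters following
    the block. *)

From mathcomp Require Import all_boot zify.

Lemma nth_cat_mid (T : Type) (x0 : T) (p x y q : seq T) n :
  size x = size y -> (n < size p) || (size p + size x <= n) ->
  nth x0 (p ++ x ++ q) n = nth x0 (p ++ y ++ q) n.
Proof.
move=> Exy Hn; rewrite !nth_cat; case: ifP => // Hp.
by rewrite -Exy; case: ifP => // Hx; move: Hn Hx; rewrite Hp /=; lia.
Qed.

Lemma inP_local (w1 w2 : word) i :
  size w1 = size w2 ->
  (forall j, i.-1 <= j <= i.+3 -> letter w1 j = letter w2 j) ->
  inP w1 i = inP w2 i.
Proof.
move=> Esz Eletter; rewrite /inP Esz !Eletter //.
all: by case: i {Eletter} => [|i] //=; lia.
Qed.

(* [inP] without the guard [2 <= i]; unlike [inP] it is invariant under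
   prepending letters. *)
Definition inP_core (w : word) (i : nat) : bool :=
  let l := size w in
  [|| (i <= l) && (letter w i.-1 == false) && (letter w i == false),
      (i + 2 <= l) && (letter w i.-1 == false) && (letter w i == true)
        && (letter w i.+1 == false) && (letter w i.+2 == false)
    | (i + 3 <= l) && (letter w i.-1 == false) && (letter w i == true)
        && (letter w i.+1 == false) && (letter w i.+2 == true)
        && (letter w i.+3 == false)].

Lemma letter_catr (p t : word) j :
  0 < j -> letter (p ++ t) (size p + j) = letter t j.
Proof.
by case: j => // j _; rewrite /letter addnS /= nth_cat ltnNge leq_addr addKn.
Qed.

Lemma inP_catr (p t : word) j :
  1 < j -> inP (p ++ t) (size p + j) = inP_core t j.
Proof.
case: j => [|[|j]] // _; rewrite /inP /inP_core.
have -> : (size p + j.+2).-1 = size p + j.+1 by lia.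
rewrite -!addnS !letter_catr // size_cat -!addnA !leq_add2l.
by have -> : 1 < size p + j.+2 by lia.
Qed.

Lemma cardP_count (w : word) : cardP w = count (inP w) (iota 0 (size w).+1).
Proof. by rewrite /cardP size_filter. Qed.

Lemma cardP_le_window (w1 w2 : word) a :
  size w1 = size w2 -> a + 6 <= (size w1).+1 ->
  (forall i, (i < a) || (a + 6 <= i) -> inP w1 i = inP w2 i) ->
  count (inP w1) (iota a 6) <= count (inP w2) (iota a 6) ->
  cardP w1 <= cardP w2.
Proof.
move=> Esz Ha Eout Hwin; rewrite !cardP_count -Esz.
have -> : (size w1).+1 = a + (6 + ((size w1).+1 - (a + 6))) by lia.
rewrite iotaD add0n iotaD !count_cat.
rewrite (@eq_in_count _ (inP w1) (inP w2) (iota 0 a)); last first.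
  by move=> i; rewrite mem_iota => /andP[_ Hi]; apply: Eout; rewrite Hi.
rewrite (@eq_in_count _ (inP w1) (inP w2) (iota (a + 6) _)); last first.
  by move=> i; rewrite mem_iota => /andP[Hi _]; apply: Eout; rewrite Hi orbT.
by rewrite leq_add2l leq_add2r.
Qed.

Lemma count_inP_catr (p t : word) :
  count (inP (p ++ t)) (iota (size p + 2) 6) = count (inP_core t) (iota 2 6).
Proof.
rewrite iotaDl count_map; apply: eq_in_count => j.
by rewrite mem_iota => /andP[Hj _]; apply: inP_catr.
Qed.

Ltac decide_window :=
  rewrite /= /inP /inP_core /letter /=;
  repeat match goal with b : bool |- _ => case: b end; by [].

Lemma count_window_01100_le_01010 (v v' : word) :
  count (inP (v ++ w01100 ++ v')) (iota (size v) 6)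
  <= count (inP (v ++ w01010 ++ v')) (iota (size v) 6).
Proof.
case/lastP: v => [|v b]; last case/lastP: v => [|v a].
- by case: v' => [|c [|d [|e [|f v']]]]; decide_window.
- by case: v' => [|c [|d [|e [|f v']]]]; decide_window.
rewrite -!cats1 !size_cat -addnA -!catA !cat1s !count_inP_catr.
by case: v' => [|c [|d [|e [|f v']]]]; decide_window.
Qed.

Lemma cardP_01100_le_01010 (v v' : word) :
  cardP (v ++ w01100 ++ v') <= cardP (v ++ w01010 ++ v').
Proof.
have Esz : size (v ++ w01100 ++ v') = size (v ++ w01010 ++ v').
  by rewrite !size_cat.
apply: cardP_le_window (count_window_01100_le_01010 v v') => //.
  by rewrite !size_cat /=; lia.
move=> i Hi; apply: inP_local => // j Hj.
have -> : v ++ w01100 ++ v' = (v ++ [:: false; true]) ++ [:: true; false] ++ false :: v'.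
  by rewrite -catA.
have -> : v ++ w01010 ++ v' = (v ++ [:: false; true]) ++ [:: false; true] ++ false :: v'.
  by rewrite -catA.
by rewrite /letter (@nth_cat_mid _ _ _ _ [:: false; true]) // size_cat /=; lia.
Qed.

Lemma arg_min_default (I : finType) (i0 i1 : I) (P : pred I) (F : I -> nat) :
  P i1 -> arg_min i0 P F = arg_min i1 P F.
Proof.
move=> Pi1; rewrite /arg_min /extremum; case: pickP => // noMin; exfalso.
have [i Pi minF] := arg_minnP F Pi1.
have /negP[] := noMin i; rewrite /= Pi.
by apply/forallP => j; apply/implyP; apply: minF.
Qed.

Lemma phi4P (u : word) :
  phi4 u = u \/ exists v v', u = v ++ w01010 ++ v' /\ phi4 u = v ++ w01100 ++ v'.
Proof.
rewrite /phi4; case: ifP => [/existsP[k0 Pk0]|_]; last by left.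
set P := (fun k : 'I_(size u).+1 => _) in Pk0 *.
(* the default [ord0] of the [arg min] in [phi4] need not satisfy [P] *)
rewrite (@arg_min_default _ _ k0 _ _ Pk0); case: arg_minnP => // k /andP[/eqP Eu _] _.
by right; exists (take k u), (drop (k + 5) u).
Qed.

Theorem lemma4p4 (N : nat) (u : seq bool) :
  1 <= N -> size u = N -> cardP (phi4 u) <= cardP u.
Proof.
move=> _ _; have [-> //|[v [v' [-> ->]]]] := phi4P u.
exact: cardP_01100_le_01010.
Qed.
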